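(* Consider hopped iterated learning in the Gaussian setting with prior $N(\bar\mu,\bar\sigma^2)$, likelihood $N(h,\sigma^2)$, and initial teacher distribution $N(\mu_0,\sigma_0^2)$, where $\mu_0\neq\bar\mu$. For every constant $c>0$ there is a constant $B_c$ depending only on $c$ such that for any $0<\varepsilon<|\mu_0-\bar\mu|$, the sample size sequence $$m_t=B_c\frac{|\mu_0-\bar\mu|}{\varepsilon}\Bigl(\frac{\sigma}{\bar\sigma}\Bigr)^2(1+\log t)^{1+c}$$ makes hopped iterated learning $\varepsilon$-self-sustaining, i.e., $|\mathbb E\mu_t-\mu_0|\le\varepsilon$ for all $t$ and $\sigma_t^2+\operatorname{Var}\mu_t$ remains bounded over all $t$.
   Context: Gaussian setting: hypotheses $h\in\mathbb R$; every learner has prior $N(\bar\mu,\bar\sigma^2)$; data generated from $h$ is $h+\phi$ with $\phi\sim N(0,\sigma^2)$. Learner $0$ is the original teacher with posterior $N(\mu_0,\sigma_0^2)$ ($\mu_0$ deterministic). Write $\tau=1/\sigma^2$, $\bar\tau=1/\bar\sigma^2$, $\beta_t=m_t\tau/(\bar\tau+m_t\tau)$. Hopped learning: learner $t\ge1$ picks a teacher $s$ uniformly at random from $\{0,1,\dots,t-1\}$ (indicator $\chi_{t,s}$), independently of everything else, and receives data $d_{t,s,1},\dots,d_{t,s,m_t}$ from teacher $s$; these are mutually independent, each distributed as $N(\mathbb E\mu_s,\operatorname{Var}\mu_s+\sigma_s^2+\sigma^2)$, and data for different teachers are independent. The learner's posterior is $N(\mu_t,\sigma_t^2)$ with $\mu_t=\frac{\beta_t}{m_t}\sum_{s=0}^{t-1}\chi_{t,s}\sum_{i=1}^{m_t}d_{t,s,i}+(1-\beta_t)\bar\mu$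 and $1/\sigma_t^2=\bar\tau+m_t\tau$. The logarithm may be taken to any fixed base greater than $1$ (the base only affects $B_c$). *)

From HB Require Import structures.
From mathcomp Require Import all_boot all_order all_algebra.
From mathcomp Require Import all_classical all_reals.
From mathcomp Require Import exp.
Set Implicit Arguments. Unset Strict Implicit. Unset Printing Implicit Defensive.
Import Order.TTheory GRing.Theory Num.Theory.
Local Open Scope ring_scope.

(* Hopped iterated learning in the Gaussian setting, described through the
   first two moments of the (random) posterior means, as determined by the
   model of the paper.

   State of learner s: (E mu_s, Var mu_s, sigma_s^2).

   Learner t >= 1 picks teacher s uniformly in {0..t-1} (independent of all
   else) and receives m_t i.i.d. data, each with mean E mu_s and variance
   Var mu_s + sigma_s^2 + sigma^2.  With
     mu_t = beta_t/m_t * sum_s chi_{t,s} sum_i d_{t,s,i} + (1 - beta_t) mubar,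
   one gets exactly
     E mu_t   = beta_t * avg_s E mu_s + (1 - beta_t) mubar,
     Var mu_t = beta_t^2 * ( avg_s (Var mu_s + sigma_s^2 + sigma^2) / m_t
                             + avg_s (E mu_s)^2 - (avg_s E mu_s)^2 ),
     sigma_t^2 = 1 / (taubar + m_t tau),
   where avg_s is the average over s = 0..t-1. *)

Section Hopped.
Variable R : realType.
Variables (mubar sigbar sigma mu0 sig0 : R).

Definition tau : R := 1 / sigma ^+ 2.
Definition taubar : R := 1 / sigbar ^+ 2.
Definition beta (m : R) : R := m * tau / (taubar + m * tau).

Definition hop_step (m : R) (h : seq (R * R * R)) : R * R * R :=
  let t : R := (size h)%:R in
  let avg_a := (\sum_(x <- h) x.1.1) / t in
  let avg_a2 := (\sum_(x <- h) x.1.1 ^+ 2) / t in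
  let avg_v := (\sum_(x <- h) (x.1.2 + x.2 + sigma ^+ 2)) / t in
  let b := beta m in
  ( b * avg_a + (1 - b) * mubar,
    b ^+ 2 * (avg_v / m + avg_a2 - avg_a ^+ 2),
    1 / (taubar + m * tau) ).

(* states of learners 0..n; learner 0 has deterministic mean mu0 (so
   E mu_0 = mu0, Var mu_0 = 0) and posterior variance sig0^2 *)
Fixpoint hop_hist (m : nat -> R) (n : nat) : seq (R * R * R) :=
  match n with
  | 0 => [:: (mu0, 0, sig0 ^+ 2)]
  | n'.+1 => let h := hop_hist m n' in rcons h (hop_step (m n) h)
  end.

Definition hop_state (m : nat -> R) (t : nat) : R * R * R :=
  nth (0, 0, 0) (hop_hist m t) t.

Definition E_mu (m : nat -> R) (t : nat) : R := (hop_state m t).1.1.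
Definition Var_mu (m : nat -> R) (t : nat) : R := (hop_state m t).1.2.
Definition post_var (m : nat -> R) (t : nat) : R := (hop_state m t).2.

Definition self_sustaining (m : nat -> R) (eps : R) : Prop :=
  (forall t, `|E_mu m t - mu0| <= eps) /\
  (exists M : R, forall t, post_var m t + Var_mu m t <= M).

End Hopped.

Definition sample_size (R : realType) (B c dist eps sigma sigbar : R)
  (t : nat) : R :=
  (Num.ceil (B * dist / eps * (sigma / sigbar) ^+ 2
             * (1 + ln (t%:R : R)) `^ (1 + c)))%:~R.

From HB Require Import structures.
From mathcomp Require Import all_boot all_order all_algebra.
From mathcomp Require Import all_classical all_reals.
From mathcomp Require Import sequences exp.
From mathcomp Require Import ring lra.
Import Order.TTheory GRing.Theory Num.Theory.
Local Open Scope ring_scope.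

(* Normalise x_t = (E mu_t - mubar) / (mu0 - mubar).  Then x_0 = 1 and x_(t+1) is beta_(t+1)
   times the average of x_0, ..., x_t, so the deficit 1 - x_t is at most
   (1 - beta_t) + sum_(1 <= s < t) (1 - beta_s) / s.  The sample sizes give
   1 - beta_t <= eps / (B |mu0 - mubar| (1 + ln t)^(1+c)), and
   sum_s 1 / (s (1 + ln s)^(1+c)) <= 1 + 1/c by comparison with the telescoping sum of
   -(1 + ln s)^(-c) / c; B = 2 + 1/c absorbs both, so |E mu_t - mu0| <= eps.
   For the spread, beta_t^2 / m_t <= 1 / (1 + r) with r = (sigma / sigbar)^2 and the
   empirical variance of eps-close means is at most eps^2, so Var mu_t + sigma_t^2 stays
   below the fixed point of M |-> M / (1 + r) + sigma^2 + eps^2 + sigbar^2 + sig0^2. *)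

Section Averages.
Context {R : realFieldType}.

Definition avg (n : nat) (f : nat -> R) : R := (\sum_(i < n) f i) / n%:R.

Lemma avgS n f : avg n.+1 f = (n%:R * avg n f + f n) / n.+1%:R.
Proof.
rewrite /avg big_ord_recr /=; congr ((_ + _) / _).
case: n => [|n]; first by rewrite big_ord0 mul0r.
by rewrite mulrC divfK ?pnatr_eq0.
Qed.

Lemma avg_ge0 n f : (forall i, (i < n)%N -> 0 <= f i) -> 0 <= avg n f.
Proof.
move=> f_ge0; apply: divr_ge0; last exact: ler0n.
by apply: sumr_ge0 => i _; exact: f_ge0.
Qed.

Lemma avg_le n f a : (0 < n)%N -> (forall i, (i < n)%N -> f i <= a) -> avg n f <= a.
Proof.
move=> n_gt0 f_le; rewrite /avg ler_pdivrMr ?ltr0n //.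
apply: (le_trans (y := \sum_(i < n) a)); last by rewrite sumr_const card_ord mulr_natr.
by apply: ler_sum => i _; exact: f_le.
Qed.

Lemma avg_sqr_shift n f a : (0 < n)%N ->
  avg n (fun i => f i ^+ 2) - avg n f ^+ 2 =
  avg n (fun i => (f i - a) ^+ 2) - (avg n f - a) ^+ 2.
Proof.
move=> n_gt0; rewrite /avg.
under [X in _ = X / _ - _]eq_bigr => i _ do rewrite sqrrB.
rewrite big_split /= sumrB sumr_const card_ord sumrMnl -mulr_suml.
have : n%:R != 0 :> R by rewrite pnatr_eq0 -lt0n.
by move=> n_neq0; field.
Qed.

Lemma avg_var_ge0 n f : 0 <= avg n (fun i => f i ^+ 2) - avg n f ^+ 2.
Proof.
case: n => [|n]; first by rewrite /avg !big_ord0 mul0r expr0n subrr.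
rewrite (avg_sqr_shift _ _ (avg n.+1 f)) // subrr expr0n subr0.
by apply: avg_ge0 => i _; exact: sqr_ge0.
Qed.

Lemma avg_var_le n f a e : (forall i, (i < n)%N -> `|f i - a| <= e) ->
  avg n (fun i => f i ^+ 2) - avg n f ^+ 2 <= e ^+ 2.
Proof.
case: n => [_|n f_near]; first by rewrite /avg !big_ord0 mul0r expr0n subrr sqr_ge0.
rewrite (avg_sqr_shift _ _ a) // lerBlDr; apply: ler_wpDr; first exact: sqr_ge0.
apply: avg_le => // i lt_in; rewrite -real_normK ?num_real //.
by move: (normr_ge0 (f i - a)) (f_near i lt_in); nra.
Qed.

Lemma discounted_avg_bounds (x b : nat -> R) :
  x 0%N = 1 -> (forall t, x t.+1 = b t.+1 * avg t.+1 x) -> (forall t, 0 <= b t <= 1) ->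
  forall t, 0 <= avg t.+1 x <= 1 /\
            1 - avg t.+1 x <= \sum_(1 <= s < t.+1) (1 - b s) / s%:R.
Proof.
move=> x0 xS b01; elim=> [|t [/andP[y_ge0 y_le1] IH]].
  by rewrite /avg big_ord1 x0 divr1 big_geq // subrr lexx ler01.
have /andP[b_ge0 b_le1] := b01 t.+1.
set y := avg t.+1 x in y_ge0 y_le1 IH *; set T : R := t.+1%:R.
set d := 1 - b t.+1; have d_ge0 : 0 <= d by rewrite subr_ge0.
have d_le1 : d <= 1 by rewrite /d; lra.
have T_ge1 : 1 <= T by rewrite ler1n.
have avgSE : avg t.+2 x = y - y * d / (T + 1).
  by rewrite avgS xS -/y -/T -natr1 -/T /d; field; apply: lt0r_neq0; lra.
have q_ge0 : 0 <= y * d / (T + 1) by apply: divr_ge0; [apply: mulr_ge0|]; lra.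
have q_le_y : y * d / (T + 1) <= y.
  by rewrite ler_pdivrMr; [apply: ler_pM|]; lra.
have q_le : y * d / (T + 1) <= d / T.
  rewrite ler_pdivrMr; last lra.
  rewrite [d / T * _]mulrDr mulr1 divfK ?pnatr_eq0 //.
  apply: (le_trans (ler_piMl d_ge0 y_le1)).
  by rewrite lerDl; apply: divr_ge0; lra.
rewrite avgSE big_nat_recr //= -/d -/T.
split; first by apply/andP; split; lra.
by rewrite opprB addrCA addrC; exact: lerD.
Qed.

Lemma discounted_avg_deficit (x b : nat -> R) :
  x 0%N = 1 -> (forall t, x t.+1 = b t.+1 * avg t.+1 x) -> (forall t, 0 <= b t <= 1) ->
  forall t, 0 <= 1 - x t <= (1 - b t) + \sum_(1 <= s < t) (1 - b s) / s%:R.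
Proof.
move=> x0 xS b01 [|t].
  by rewrite x0 big_geq // subrr lexx addr0 subr_ge0; case/andP: (b01 0%N).
have [/andP[y_ge0 y_le1] y_def] := discounted_avg_bounds _ _ x0 xS b01 t.
have /andP[b_ge0 b_le1] := b01 t.+1.
rewrite xS; set y := avg t.+1 x in y_ge0 y_le1 y_def *.
have : b t.+1 * y <= 1 by rewrite mulr_ile1.
have : (1 - b t.+1) * y <= 1 - b t.+1 by apply: ler_piMr; lra.
have : 0 <= b t.+1 * y by exact: mulr_ge0.
nra.
Qed.

End Averages.

Section LogSeries.
Context {R : realType} (c : R).
Hypothesis c_gt0 : 0 < c.

Definition log_weight (t : nat) : R := (1 + ln t%:R) `^ (1 + c).

Lemma gt0_powRE (a x : R) : 0 < a -> a `^ x = expR (x * ln a).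
Proof. by move=> a_gt0; rewrite /powR gt_eqF. Qed.

Lemma log_weight_ge1 t : 1 <= log_weight t.
Proof.
have lnt_ge0 : 0 <= ln (t%:R : R).
  by case: t => [|t]; [rewrite ln0 | apply: ln_ge0; rewrite ler1n].
rewrite /log_weight -[leLHS](powRr0 (1 + ln t%:R)).
by apply: ler_powR; [rewrite lerDl | have := c_gt0; lra].
Qed.

Lemma divB_le_lnB (x y : R) : 0 < x -> 0 < y -> (y - x) / y <= ln y - ln x.
Proof.
move=> x_gt0 y_gt0.
have : ln (x / y) <= x / y - 1.
  rewrite -[X in ln X](subrK 1) addrC; apply: le_ln1Dx.
  by have := divr_gt0 x_gt0 y_gt0; lra.
by rewrite ln_div ?posrE // mulrBl divff ?gt_eqF //; lra.
Qed.

Lemma log_weight_telescope j : (0 < j)%N ->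
  1 / (j.+1%:R * log_weight j.+1) <=
  ((1 + ln j%:R) `^ (- c) - (1 + ln j.+1%:R) `^ (- c)) / c.
Proof.
move=> j_gt0; have j_ge1 : 1 <= j%:R :> R by rewrite ler1n.
rewrite /log_weight -natr1.
set a := 1 + ln j%:R; set b := 1 + ln (j%:R + 1).
have a_ge1 : 1 <= a by rewrite lerDl ln_ge0.
have b_ge1 : 1 <= b by rewrite lerDl ln_ge0 //; lra.
have lnB_ge : 1 / ((j%:R + 1) * b) <= ln b - ln a.
  apply: (le_trans _ (divB_le_lnB a b _ _)); try lra.
  rewrite invfM mulrA; apply: ler_wpM2r; first by rewrite invr_ge0; lra.
  have := divB_le_lnB (j%:R) (j%:R + 1); rewrite addrAC subrr add0r /a /b; lra.
rewrite !gt0_powRE; try lra.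
set E := expR (c * ln b).
have E_gt0 : 0 < E by exact: expR_gt0.
have expE : expR ((1 + c) * ln b) = b * E by rewrite mulrDl mul1r expRD lnK // posrE; lra.
have expNb : expR (- c * ln b) = E^-1 by rewrite mulNr expRN.
(* expR (- c ln a) = expR (- c ln b) * expR (c (ln b - ln a)), and 1 + u <= expR u *)
have expNa : E^-1 * (1 + c * (ln b - ln a)) <= expR (- c * ln a).
  have -> : - c * ln a = - (c * ln b) + c * (ln b - ln a) by ring.
  by rewrite expRD expRN ler_wpM2l ?invr_ge0 ?expR_ge1Dx // ltW.
rewrite expE expNb.
have -> : 1 / ((j%:R + 1) * (b * E)) = E^-1 * (1 / ((j%:R + 1) * b)).
  by field; rewrite !gt_eqF //; lra.
apply: le_trans (_ : E^-1 * (ln b - ln a) <= _).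
  by rewrite ler_wpM2l ?invr_ge0 // ltW.
rewrite ler_pdivlMr // mulrC; move: expNa; rewrite mulrDr mulr1; nra.
Qed.

Lemma sum_inv_log_weight_le t :
  \sum_(1 <= s < t) 1 / (s%:R * log_weight s) <= 1 + c^-1.
Proof.
have c_inv_gt0 : 0 < c^-1 by rewrite invr_gt0.
suff sum_le n : \sum_(1 <= s < n.+2) 1 / (s%:R * log_weight s) <=
                1 + c^-1 - (1 + ln n.+1%:R) `^ (- c) / c.
  case: t => [|[|t]]; try by rewrite big_geq //; lra.
  by apply: (le_trans (sum_le t)); rewrite lerBlDr lerDl divr_ge0 ?powR_ge0 ?ltW.
elim: n => [|n IH].
  by rewrite big_nat1 /log_weight ln1 addr0 !powR1 mulr1 divr1 mul1r; lra.
rewrite big_nat_recr //=; move: (log_weight_telescope _ (ltn0Sn n)) IH.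
rewrite mulrBl => telescope sum_le; apply: le_trans (lerD sum_le telescope) _; lra.
Qed.

Lemma deficit_sum_le (d : nat -> R) (k : R) : 0 <= k ->
  (forall t, d t <= k / log_weight t) ->
  forall t, d t + \sum_(1 <= s < t) d s / s%:R <= k * (2 + c^-1).
Proof.
move=> k_ge0 d_le t.
have d_le_k s : d s <= k.
  by apply: (le_trans (d_le s)); rewrite ler_pdivrMr ?ler_peMr ?log_weight_ge1 //;
    apply: lt_le_trans (log_weight_ge1 s).
have sum_le : \sum_(1 <= s < t) d s / s%:R <= k * (1 + c^-1).
  apply: le_trans (ler_wpM2l k_ge0 (sum_inv_log_weight_le t)); rewrite mulr_sumr.
  apply: ler_sum => s _; rewrite mulrA mulr1 invfM mulrA mulrAC.
  by apply: ler_wpM2r; [rewrite invr_ge0 ler0n | exact: d_le].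
by move: (d_le_k t) sum_le; lra.
Qed.

Lemma sample_size_ge B dist eps sigma sigbar t :
  B * dist / eps * (sigma / sigbar) ^+ 2 * log_weight t <=
  sample_size B c dist eps sigma sigbar t.
Proof. exact: ceil_ge. Qed.

Lemma sample_size_ge1 B dist eps sigma sigbar t :
  0 < B * dist / eps * (sigma / sigbar) ^+ 2 -> 1 <= sample_size B c dist eps sigma sigbar t.
Proof.
move=> coef_gt0; have := sample_size_ge B dist eps sigma sigbar t.
move/(lt_le_trans (mulr_gt0 coef_gt0 (lt_le_trans ltr01 (log_weight_ge1 t)))).
by rewrite ltr0z gtz0_ge1 ler1z.
Qed.

End LogSeries.

Section HoppedLearning.
Context {R : realType} {mubar sigbar sigma mu0 sig0 : R} {m : nat -> R}.

Local Notation state := (hop_state mubar sigbar sigma mu0 sig0 m).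
Local Notation E := (E_mu mubar sigbar sigma mu0 sig0 m).
Local Notation V := (Var_mu mubar sigbar sigma mu0 sig0 m).
Local Notation P := (post_var mubar sigbar sigma mu0 sig0 m).
Local Notation beta := (beta sigbar sigma).

Lemma hop_hist_map n : hop_hist mubar sigbar sigma mu0 sig0 m n = map state (iota 0 n.+1).
Proof.
elim: n => [//|n IH].
rewrite -[n.+2]addn1 iotaD add0n cats1 map_rcons -IH /=; congr rcons.
by rewrite /hop_state /= nth_rcons IH size_map size_iota ltnn eqxx -IH.
Qed.

Lemma hop_stateS n :
  state n.+1 = hop_step mubar sigbar sigma (m n.+1) (map state (iota 0 n.+1)).
Proof.
rewrite -hop_hist_map {1}/hop_state /= nth_rcons.
by rewrite hop_hist_map size_map size_iota ltnn eqxx.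
Qed.

Lemma sum_map_state n (F : R * R * R -> R) :
  \sum_(z <- map state (iota 0 n)) F z = \sum_(s < n) F (state s).
Proof.
have -> : iota 0 n = index_iota 0 n by rewrite /index_iota subn0.
by rewrite big_map big_mkord.
Qed.

Lemma E_muS t :
  E t.+1 = beta (m t.+1) * avg t.+1 E + (1 - beta (m t.+1)) * mubar.
Proof. by rewrite /E_mu hop_stateS /hop_step !sum_map_state size_map size_iota. Qed.

Lemma Var_muS t :
  V t.+1 = beta (m t.+1) ^+ 2 *
    (avg t.+1 (fun s => V s + P s + sigma ^+ 2) / m t.+1
     + (avg t.+1 (fun s => E s ^+ 2) - avg t.+1 E ^+ 2)).
Proof.
by rewrite /Var_mu hop_stateS /hop_step !sum_map_state size_map size_iota addrA.
Qed.

Lemma post_varS t : P t.+1 = 1 / (taubar sigbar + m t.+1 * tau sigma).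
Proof. by rewrite /post_var hop_stateS. Qed.

Hypotheses (sigbar_gt0 : 0 < sigbar) (sigma_gt0 : 0 < sigma).

Let r := (sigma / sigbar) ^+ 2.
Let r_gt0 : 0 < r. Proof. by rewrite exprn_gt0 // divr_gt0. Qed.

Lemma betaE x : 0 <= x -> beta x = x / (r + x).
Proof.
move=> x_ge0; rewrite /beta /tau /taubar /r; field.
have sigma2_gt0 := exprn_gt0 2 sigma_gt0.
have xsigbar2_ge0 := mulr_ge0 x_ge0 (sqr_ge0 sigbar).
by rewrite !gt_eqF // ltr_wpDr.
Qed.

Lemma beta_ge0_le1 x : 0 <= x -> 0 <= beta x <= 1.
Proof.
move=> x_ge0; have := r_gt0; rewrite betaE // => r_gt0'.
by apply/andP; split; [apply: divr_ge0 | rewrite ler_pdivrMr]; lra.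
Qed.

Lemma one_sub_beta_le x a : 0 < a -> a * r <= x -> 1 - beta x <= a^-1.
Proof.
move=> a_gt0 arx; have r_gt0' := r_gt0.
have x_gt0 : 0 < x by apply: lt_le_trans arx; exact: mulr_gt0.
have -> : 1 - beta x = r / (r + x) by rewrite betaE ?ltW //; field; apply: lt0r_neq0; lra.
rewrite ler_pdivrMr; last lra.
by rewrite -(ler_pM2l a_gt0) mulVKf ?gt_eqF //; lra.
Qed.

Lemma beta_sqr_div_le x : 1 <= x -> beta x ^+ 2 / x <= 1 / (1 + r).
Proof.
move=> x_ge1; have r_gt0' := r_gt0.
have -> : beta x ^+ 2 / x = x / (r + x) ^+ 2.
  by rewrite betaE; [field; rewrite !gt_eqF //|]; lra.
rewrite ler_pdivrMr ?exprn_gt0 ?mul1r ?ler_pdivlMl; try lra.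
by nra.
Qed.

Lemma post_var_le t : 0 <= m t.+1 -> 0 <= P t.+1 <= sigbar ^+ 2.
Proof.
move=> m_ge0; have sigbar2_gt0 := exprn_gt0 2 sigbar_gt0.
have taubar_gt0 : 0 < taubar sigbar by rewrite /taubar divr_gt0.
have m_tau_ge0 : 0 <= m t.+1 * tau sigma by rewrite mulr_ge0 // ltW // divr_gt0 ?exprn_gt0.
have den_gt0 : 0 < taubar sigbar + m t.+1 * tau sigma by rewrite ltr_wpDr.
rewrite post_varS divr_ge0 ?(ltW den_gt0) //= ler_pdivrMr //.
by rewrite mulrDr /taubar mul1r mulfV ?gt_eqF // lerDl mulr_ge0 ?(ltW sigbar2_gt0).
Qed.

Hypothesis m_ge1 : forall t, 1 <= m t.

Lemma E_mu_dev t : mu0 != mubar ->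
  `|E t - mu0| <=
  `|mu0 - mubar| * ((1 - beta (m t)) + \sum_(1 <= s < t) (1 - beta (m s)) / s%:R).
Proof.
move=> mu0_neq; set D := mu0 - mubar; have D_neq0 : D != 0 by rewrite subr_eq0.
pose x s := (E s - mubar) / D.
have x0 : x 0%N = 1 by apply: divff.
have xS s : x s.+1 = beta (m s.+1) * avg s.+1 x.
  rewrite /x E_muS /avg -mulr_suml sumrB sumr_const card_ord -mulr_natl.
  by field; rewrite nat1r pnatr_eq0 D_neq0.
have beta01 s : 0 <= beta (m s) <= 1 by apply: beta_ge0_le1; have := m_ge1 s; lra.
have /andP[dev_ge0 dev_le] := discounted_avg_deficit _ _ x0 xS beta01 t.
have -> : E t - mu0 = - D * (1 - x t) by rewrite /x /D; field.
by rewrite normrM normrN (ger0_norm dev_ge0) ler_wpM2l.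
Qed.

Section Variance.
Variable eps : R.
Hypothesis E_mu_near : forall t, `|E t - mu0| <= eps.

Lemma Var_muS_le t Mv : (forall s, (s <= t)%N -> 0 <= V s + P s <= Mv) ->
  0 <= V t.+1 <= (Mv + sigma ^+ 2) / (1 + r) + eps ^+ 2.
Proof.
move=> VP_le; have r_gt0' := r_gt0; have sigma2_ge0 := sqr_ge0 sigma.
have m_ge1' := m_ge1 t.+1.
set A := avg t.+1 (fun s => V s + P s + sigma ^+ 2).
have A_ge0 : 0 <= A.
  by apply: avg_ge0 => s; rewrite ltnS => /VP_le /andP[VP_ge0 _]; lra.
have A_le : A <= Mv + sigma ^+ 2.
  by apply: avg_le => // s; rewrite ltnS => /VP_le /andP[_ VP_le']; lra.
set Q := avg t.+1 (fun s => E s ^+ 2) - avg t.+1 E ^+ 2.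
have Q_ge0 : 0 <= Q := avg_var_ge0 _ _.
have Q_le : Q <= eps ^+ 2 := avg_var_le _ _ _ _ (fun s _ => E_mu_near s).
set b := beta (m t.+1).
have /andP[b_ge0 b_le1] : 0 <= b <= 1 by apply: beta_ge0_le1; lra.
have b2_le1 : b ^+ 2 <= 1 by rewrite expr_le1.
have b2m_le := beta_sqr_div_le _ m_ge1'.
have b2m_ge0 : 0 <= b ^+ 2 / m t.+1 by rewrite divr_ge0 ?sqr_ge0; lra.
have -> : V t.+1 = A * (b ^+ 2 / m t.+1) + b ^+ 2 * Q.
  by rewrite Var_muS -/A -/Q -/b; field; rewrite gt_eqF //; lra.
have AQ_le : A * (b ^+ 2 / m t.+1) <= (Mv + sigma ^+ 2) * (1 / (1 + r)) by rewrite ler_pM.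
have bQ_le : b ^+ 2 * Q <= Q by rewrite ler_piMl.
have bQ_ge0 : 0 <= b ^+ 2 * Q by rewrite mulr_ge0 ?sqr_ge0.
have AQ_ge0 : 0 <= A * (b ^+ 2 / m t.+1) by rewrite mulr_ge0.
by move: AQ_le; rewrite mul1r; lra.
Qed.

Lemma Var_post_bounded : exists M, forall t, P t + V t <= M.
Proof.
have r_gt0' := r_gt0.
pose K := sigma ^+ 2 + eps ^+ 2 + sigbar ^+ 2 + sig0 ^+ 2.
have sqr_ge0s := (sqr_ge0 sigma, sqr_ge0 eps, sqr_ge0 sigbar, sqr_ge0 sig0).
have K_ge0 : 0 <= K by rewrite /K; case: sqr_ge0s => [[[? ?] ?] ?]; lra.
pose M := K * (1 + r) / r.
have M_fix : M / (1 + r) + K = M by rewrite /M; field; rewrite !gt_eqF //; lra.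
have M_div_ge0 : 0 <= M / (1 + r).
  by rewrite /M; apply: divr_ge0; [apply: divr_ge0; [apply: mulr_ge0|]|]; lra.
suff VP_le t : forall s, (s <= t)%N -> 0 <= V s + P s <= M.
  by exists M => t; case/andP: (VP_le t t (leqnn t)) => _; rewrite addrC.
elim: t => [s | t IH s].
  rewrite leqn0 => /eqP ->; have -> : V 0%N + P 0%N = sig0 ^+ 2 := add0r _.
  by rewrite /K in M_fix; case: sqr_ge0s => [[[? ?] ?] ?]; lra.
rewrite leq_eqVlt ltnS => /orP[/eqP -> | /IH //].
have /andP[V_ge0 V_le] := Var_muS_le t M IH.
have /andP[P_ge0 P_le] : 0 <= P t.+1 <= sigbar ^+ 2.
  by apply: post_var_le; have := m_ge1 t.+1; lra.
have sigma2_div_le : sigma ^+ 2 / (1 + r) <= sigma ^+ 2.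
  by rewrite ler_pdivrMr ?ler_peMr ?sqr_ge0; lra.
rewrite /K in M_fix; move: V_le; rewrite mulrDl; case: sqr_ge0s => [[[? ?] ?] ?]; lra.
Qed.

End Variance.

End HoppedLearning.

Theorem theorem4 (R : realType) (c : R) (hc : 0 < c) :
  exists B : R, 0 < B /\
    forall (mubar sigbar sigma mu0 sig0 : R),
      0 < sigbar -> 0 < sigma -> 0 < sig0 -> mu0 != mubar ->
      forall eps : R, 0 < eps -> eps < `|mu0 - mubar| ->
        self_sustaining mubar sigbar sigma mu0 sig0
          (sample_size B c `|mu0 - mubar| eps sigma sigbar) eps.
Proof.
have c_inv_gt0 : 0 < c^-1 by rewrite invr_gt0.
exists (2 + c^-1); split; first lra.
move=> mubar sigbar sigma mu0 sig0 sigbar_gt0 sigma_gt0 _ mu0_neq eps eps_gt0 _.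
set B := 2 + c^-1; set D := `|mu0 - mubar|; set m := sample_size B c D eps sigma sigbar.
have B_gt0 : 0 < B by rewrite /B; lra.
have D_gt0 : 0 < D by rewrite normr_gt0 subr_eq0.
have coef_gt0 : 0 < B * D / eps by rewrite divr_gt0 ?mulr_gt0.
have m_ge1 t : 1 <= m t.
  by apply: sample_size_ge1 => //; apply: mulr_gt0 coef_gt0 _; exact/exprn_gt0/divr_gt0.
have one_sub_beta t : 1 - beta sigbar sigma (m t) <= eps / (B * D) / log_weight c t.
  rewrite -[eps / (B * D)]invf_div -invfM; apply: one_sub_beta_le => //.
    by rewrite mulr_gt0 // (lt_le_trans ltr01 (log_weight_ge1 _ hc t)).
  by rewrite mulrAC; exact: sample_size_ge.
have E_mu_near t : `|E_mu mubar sigbar sigma mu0 sig0 m t - mu0| <= eps.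
  apply: (le_trans (E_mu_dev sigbar_gt0 sigma_gt0 m_ge1 t mu0_neq)).
  have k_ge0 : 0 <= eps / (B * D) by rewrite divr_ge0 ?mulr_ge0 ?ltW.
  apply: (le_trans (ler_wpM2l (ltW D_gt0) (deficit_sum_le _ hc _ _ k_ge0 one_sub_beta t))).
  suff -> : D * (eps / (B * D) * B) = eps by [].
  by field; rewrite !gt_eqF.
split=> //; exact: Var_post_bounded.
Qed.
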